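(* Let $(Z,\nu)$ be a matrix gauge space with $\mathbb{C}$-proper matrix gauge and let $(\tilde Z,u)$ be its unitization. Then each $u_n$ is well-defined (the defining infimum is over a nonempty set, so $u_n$ takes finite values in $[0,\infty)$), and $\{u_n\}$ is a matrix-compatible function on $\tilde Z$: for all $(A,X)\in M_n(\tilde Z)$, $(B,Y)\in M_k(\tilde Z)$ and scalar $T\in M_{n,k}$, $u_{n+k}((A,X)\oplus(B,Y))=\max\{u_n(A,X),u_k(B,Y)\}$ and $u_k(T^*(A,X)T)\le\|T\|^2u_n(A,X)$.
   Context: A matrix gauge on a complex vector space $Z$ is a sequence $\{\nu_n:M_n(Z)\to[0,\infty)\}$ with $\nu_n(x+y)\le\nu_n(x)+\nu_n(y)$, $\nu_n(tx)=t\nu_n(x)$ ($t\ge0$), $\nu_k(X^*AX)\le\|X\|^2\nu_n(A)$ for scalar $X\in M_{n,k}$, and $\nu_{n+m}(A\oplus B)=\max\{\nu_n(A),\nu_m(B)\}$; it is $\mathbb{C}$-proper if $\nu_1(i^kz)=0$ for $k=0,1,2,3$ implies $z=0$. A matrix-compatible function is a sequence of functions satisfying the last two conditions. The unitization of $(Z,\nu)$ is $\tilde Z=Z\times\mathbb{C}$ with entrywise operations, $M_n(\tilde Z)$ identified with $M_n(Z)\times M_n$, and $u_n(A,X)=\inf\{t>0: X_t\gg0,\ \nu_n(X_t^{-1/2}AX_t^{-1/2})\le1\}$, where $X_t=tI_n-\operatorname{Re}(X)$, $\operatorname{Re}(X)=\frac12(X+X^* )$, and $X_t\gg0$ means $\sigma(X_t)\subset(0,\infty)$;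 $T^*(A,X)T=(T^*AT,T^*XT)$ and $(A,X)\oplus(B,Y)=(A\oplus B,X\oplus Y)$. *)

From Stdlib Require Import Reals Lra ClassicalEpsilon FunctionalExtensionality.
From HB Require Import structures.
From mathcomp Require Import all_boot all_order all_algebra.
Set Implicit Arguments. Unset Strict Implicit. Unset Printing Implicit Defensive.
Import GRing.Theory.
Local Open Scope R_scope.

Record cpx := Cpx { cre : R; cim : R }.

Definition cpx_eqb (x y : cpx) : bool :=
  if Req_EM_T (cre x) (cre y) then
    if Req_EM_T (cim x) (cim y) then true else false
  else false.

Lemma cpx_eqP : Equality.axiom cpx_eqb.
Proof.
move=> [a b] [c d]; rewrite /cpx_eqb /=.
case: (Req_EM_T a c) => [h|h]; last by constructor => -[].
case: (Req_EM_T b d) => [h'|h']; first by constructor; rewrite h h'.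
by constructor => -[].
Qed.
HB.instance Definition _ := hasDecEq.Build cpx cpx_eqP.

Definition cpx_find (P : pred cpx) (n : nat) : option cpx :=
  match excluded_middle_informative (exists x, P x) with
  | left H => Some (proj1_sig (constructive_indefinite_description _ H))
  | right _ => None
  end.

Lemma cpx_find_correct P n x : cpx_find P n = Some x -> P x.
Proof.
rewrite /cpx_find; case: excluded_middle_informative => // H [<-].
exact: proj2_sig (constructive_indefinite_description _ H).
Qed.
Lemma cpx_find_complete (P : pred cpx) : (exists x, P x) -> exists n, cpx_find P n.
Proof.
move=> H; exists 0%N; rewrite /cpx_find; by case: excluded_middle_informative.
Qed.
Lemma cpx_find_ext (P Q : pred cpx) : P =1 Q -> cpx_find P =1 cpx_find Q.
Proof. by move=> h; have -> : P = Q by apply: functional_extensionality. Qed.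
HB.instance Definition _ := hasChoice.Build cpx cpx_find_correct cpx_find_complete cpx_find_ext.

Definition cpx0 := Cpx 0 0.
Definition cpx1 := Cpx 1 0.
Definition cpx_add x y := Cpx (cre x + cre y) (cim x + cim y).
Definition cpx_opp x := Cpx (- cre x) (- cim x).
Definition cpx_mul x y := Cpx (cre x * cre y - cim x * cim y) (cre x * cim y + cim x * cre y).
Definition cpx_inv x := Cpx (cre x / (cre x * cre x + cim x * cim x))
                            (- cim x / (cre x * cre x + cim x * cim x)).

Lemma cpx_addA : associative cpx_add.
Proof. move=> [a b] [c d] [e f]; rewrite /cpx_add /=; f_equal; ring. Qed.
Lemma cpx_addC : commutative cpx_add.
Proof. move=> [a b] [c d]; rewrite /cpx_add /=; f_equal; ring. Qed.
Lemma cpx_add0 : left_id cpx0 cpx_add.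
Proof. move=> [a b]; rewrite /cpx_add /=; f_equal; ring. Qed.
Lemma cpx_addN : left_inverse cpx0 cpx_opp cpx_add.
Proof. move=> [a b]; rewrite /cpx_add /cpx0 /=; f_equal; ring. Qed.
HB.instance Definition _ := GRing.isZmodule.Build cpx cpx_addA cpx_addC cpx_add0 cpx_addN.

Lemma cpx_mulA : associative cpx_mul.
Proof. move=> [a b] [c d] [e f]; rewrite /cpx_mul /=; f_equal; ring. Qed.
Lemma cpx_mulC : commutative cpx_mul.
Proof. move=> [a b] [c d]; rewrite /cpx_mul /=; f_equal; ring. Qed.
Lemma cpx_mul1 : left_id cpx1 cpx_mul.
Proof. move=> [a b]; rewrite /cpx_mul /=; f_equal; ring. Qed.
Lemma cpx_mulDl : left_distributive cpx_mul cpx_add.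
Proof. move=> [a b] [c d] [e f]; rewrite /cpx_mul /cpx_add /=; f_equal; ring. Qed.
Lemma cpx_one_neq0 : cpx1 != cpx0.
Proof. apply/eqP => -[h]; lra. Qed.
HB.instance Definition _ := GRing.Zmodule_isComNzRing.Build cpx
  cpx_mulA cpx_mulC cpx_mul1 cpx_mulDl cpx_one_neq0.

Lemma cpx_mulVf x : x != 0%R -> cpx_mul (cpx_inv x) x = 1%R.
Proof.
case: x => a b /eqP hx.
have hn : (a * a + b * b <> 0).
  move=> h; apply: hx.
  have ha : a = 0 by nra.
  have hb : b = 0 by nra.
  by rewrite ha hb.
rewrite /cpx_mul /cpx_inv /=; change (1%R : cpx) with cpx1; rewrite /cpx1; f_equal; field; lra.
Qed.
Lemma cpx_inv0 : cpx_inv 0%R = 0%R.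
Proof.
change (0%R : cpx) with cpx0; rewrite /cpx_inv /cpx0 /=; f_equal;
 rewrite ?Rmult_0_l ?Rplus_0_l ?Ropp_0; rewrite /Rdiv Rmult_0_l //.
Qed.
HB.instance Definition _ := GRing.ComNzRing_isField.Build cpx cpx_mulVf cpx_inv0.


Definition cconj (z : cpx) : cpx := Cpx (cre z) (- cim z).
Definition rC (r : R) : cpx := Cpx r 0.
Definition ci : cpx := Cpx 0 1.
Definition cabs (z : cpx) : R := sqrt (cre z ^ 2 + cim z ^ 2).

Definition is_inf (E : R -> Prop) (m : R) : Prop :=
  (forall x, E x -> m <= x) /\ (forall b, (forall x, E x -> b <= x) -> b <= m).
Definition Inf (E : R -> Prop) : R := epsilon (inhabits 0) (is_inf E).

Definition adj m n (T : 'M[cpx]_(m, n)) : 'M[cpx]_(n, m) := (map_mx cconj T)^T.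
Definition hermitian n (M : 'M[cpx]_n) : Prop := adj M = M.
Definition mx_pos n (M : 'M[cpx]_n) : Prop :=
  forall a : cpx, eigenvalue M a -> cim a = 0 /\ 0 < cre a.
Definition ReM n (X : 'M[cpx]_n) : 'M[cpx]_n := (rC (/ 2) *: (X + adj X))%R.
Definition Xt n (t : R) (X : 'M[cpx]_n) : 'M[cpx]_n := ((rC t)%:M - ReM X)%R.
(* M^{-1/2} : the (unique) positive Hermitian square root of M^{-1}
   (meaningful when M is Hermitian with M >> 0) *)
Definition invsqrt n (M : 'M[cpx]_n) : 'M[cpx]_n :=
  epsilon (inhabits 0%R)
    (fun S => hermitian S /\ mx_pos S /\ (S *m S)%R = invmx M).

Definition vnorm k (v : 'cV[cpx]_k) : R :=
  sqrt (\big[Rplus/0]_(i < k) (cabs (v i ord0) ^ 2)).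
Definition opnorm m n (T : 'M[cpx]_(m, n)) : R :=
  Inf (fun c => 0 <= c /\ forall v : 'cV[cpx]_n, vnorm (T *m v)%R <= c * vnorm v).

Section ZMat.
Variable Z : lmodType cpx.
Definition lmulZ m n p (S : 'M[cpx]_(m, n)) (A : 'M[Z]_(n, p)) : 'M[Z]_(m, p) :=
  (\matrix_(i, j) \sum_(l < n) (S i l *: A l j))%R.
Definition rmulZ m n p (A : 'M[Z]_(m, n)) (S : 'M[cpx]_(n, p)) : 'M[Z]_(m, p) :=
  (\matrix_(i, j) \sum_(l < n) (S l j *: A i l))%R.
Definition congZ n k (X : 'M[cpx]_(n, k)) (A : 'M[Z]_n) : 'M[Z]_k :=
  lmulZ (adj X) (rmulZ A X).
Definition dsumZ n m (A : 'M[Z]_n) (B : 'M[Z]_m) : 'M[Z]_(n + m) :=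
  block_mx A 0%R 0%R B.
Definition smulZ n (t : R) (A : 'M[Z]_n) : 'M[Z]_n := map_mx (fun z => rC t *: z)%R A.

Definition matrix_compatible (nu : forall n, 'M[Z]_n -> R) : Prop :=
  (forall n k (X : 'M[cpx]_(n, k)) (A : 'M[Z]_n),
      nu k (congZ X A) <= opnorm X ^ 2 * nu n A) /\
  (forall n m (A : 'M[Z]_n) (B : 'M[Z]_m),
      nu (n + m)%N (dsumZ A B) = Rmax (nu n A) (nu m B)).

Definition matrix_gauge (nu : forall n, 'M[Z]_n -> R) : Prop :=
  (forall n (A : 'M[Z]_n), 0 <= nu n A) /\
  (forall n (A B : 'M[Z]_n), nu n (A + B)%R <= nu n A + nu n B) /\
  (forall n (t : R) (A : 'M[Z]_n), 0 <= t -> nu n (smulZ t A) = t * nu n A) /\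
  matrix_compatible nu.

Definition C_proper (nu : forall n, 'M[Z]_n -> R) : Prop :=
  forall z : Z, (forall k : nat, (k < 4)%N -> nu 1%N (const_mx (ci ^+ k *: z)%R) = 0) -> z = 0%R.

(* Unitization: M_n(Z~) = M_n(Z) x M_n *)
Definition ufeas (nu : forall n, 'M[Z]_n -> R) n (A : 'M[Z]_n) (X : 'M[cpx]_n) (t : R) : Prop :=
  0 < t /\ mx_pos (Xt t X) /\
  nu n (lmulZ (invsqrt (Xt t X)) (rmulZ A (invsqrt (Xt t X)))) <= 1.
Definition unorm (nu : forall n, 'M[Z]_n -> R) n (A : 'M[Z]_n) (X : 'M[cpx]_n) : R :=
  Inf (ufeas nu A X).
End ZMat.

From Pilot Require Import Defs.
From Stdlib Require Import Reals Lra ClassicalEpsilon.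
From HB Require Import structures.
From mathcomp Require Import all_boot all_order all_algebra closed_field sesquilinear spectral.
From mathcomp Require Import Rstruct ring.
From mathcomp.real_closed Require Import complex.
Set Implicit Arguments. Unset Strict Implicit. Unset Printing Implicit Defensive.
Import Order.TTheory GRing.Theory Num.Theory Num.Def.

Local Open Scope ring_scope.

(* Everything rests on one comparison: if
   [M, M' >> 0] and [T^* M T <= M'] as quadratic forms, then [W = M^{1/2} T M'^{-1/2}] is a
   contraction, so matrix compatibility of [nu] gives
     [nu(M'^{-1/2} T^* A T M'^{-1/2}) = nu(W^* (M^{-1/2} A M^{-1/2}) W) <= nu(M^{-1/2} A M^{-1/2})].
   With [T = 1] this makes the set of admissible [t] an up-ray, and shows that [nu(S A S)] is
   the same for every Hermitian square root [S] of [M^{-1}], so that block-diagonal square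
   roots give the direct-sum identity.  With [T] a large multiple of [1] it produces an
   admissible [t].  Since [T^* X_t T < Y_s] for [s > ||T||^2 t], where [Y_s] is built from
   [T^* X T], it gives the congruence inequality. *)

(** * Complex scalars *)

(* [cpx] receives the numeric closed field structure of [R[i]] by transport, so that
   the spectral theorem of [spectral] applies to matrices over [cpx]. *)
Definition to_complex (x : cpx) : R[i] := Complex (cre x) (cim x).
Definition of_complex (z : R[i]) : cpx := Cpx (complex.Re z) (complex.Im z).

Lemma to_complexK : cancel to_complex of_complex. Proof. by case. Qed.
Lemma of_complexK : cancel of_complex to_complex. Proof. by case. Qed.
Lemma to_complex_inj : injective to_complex. Proof. exact: can_inj to_complexK. Qed.

Lemma to_complexB : {morph to_complex : x y / x - y}. Proof. by case=> a b [c d]. Qed.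
Lemma to_complexM : {morph to_complex : x y / x * y}. Proof. by case=> a b [c d]. Qed.

HB.instance Definition _ := GRing.isZmodMorphism.Build cpx R[i] to_complex to_complexB.
HB.instance Definition _ :=
  GRing.isMonoidMorphism.Build cpx R[i] to_complex (conj (erefl _) to_complexM).

Definition cpx_le (x y : cpx) : bool := to_complex x <= to_complex y.
Definition cpx_lt (x y : cpx) : bool := to_complex x < to_complex y.
Definition cpx_norm (x : cpx) : cpx := of_complex `|to_complex x|.

Lemma to_complex_norm x : to_complex (cpx_norm x) = `|to_complex x|.
Proof. exact: of_complexK. Qed.

Lemma cpx_ler_normD x y : cpx_le (cpx_norm (x + y)) (cpx_norm x + cpx_norm y).
Proof. by rewrite /cpx_le rmorphD !to_complex_norm rmorphD ler_normD. Qed.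
Lemma cpx_addr_gt0 x y : cpx_lt 0 x -> cpx_lt 0 y -> cpx_lt 0 (x + y).
Proof. by rewrite /cpx_lt rmorphD rmorph0; apply: addr_gt0. Qed.
Lemma cpx_normr0_eq0 x : cpx_norm x = 0 -> x = 0.
Proof.
move=> h; apply: to_complex_inj; rewrite rmorph0; apply/normr0_eq0.
by rewrite -to_complex_norm h rmorph0.
Qed.
Lemma cpx_ger_leVge x y : cpx_le 0 x -> cpx_le 0 y -> cpx_le x y || cpx_le y x.
Proof. by rewrite /cpx_le rmorph0; apply: ger_leVge. Qed.
Lemma cpx_normrM : {morph cpx_norm : x y / x * y}.
Proof. by move=> x y; apply: to_complex_inj; rewrite !(rmorphM, to_complex_norm) normrM. Qed.
Lemma cpx_ler_def x y : cpx_le x y = (cpx_norm (y - x) == y - x).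
Proof.
rewrite /cpx_le -subr_ge0 ger0_def -rmorphB -to_complex_norm.
by apply/eqP/eqP => [h|->//]; apply: to_complex_inj.
Qed.
Lemma cpx_ltr_def x y : cpx_lt x y = (y != x) && cpx_le x y.
Proof. by rewrite /cpx_lt lt_def (inj_eq to_complex_inj). Qed.

HB.instance Definition _ := Num.IntegralDomain_isNumRing.Build cpx
  cpx_ler_normD cpx_addr_gt0 cpx_normr0_eq0 cpx_ger_leVge cpx_normrM
  cpx_ler_def cpx_ltr_def.

Lemma cpx_closed_field : GRing.closed_field_axiom cpx.
Proof.
move=> n P n_gt0; have [z hz] := @solve_monicpoly R[i] n (to_complex \o P) n_gt0.
exists (of_complex z); apply: to_complex_inj.
rewrite rmorphXn /= of_complexK hz rmorph_sum; apply: eq_bigr => i _.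
by rewrite rmorphM rmorphXn /= of_complexK.
Qed.
HB.instance Definition _ := Field_isAlgClosed.Build cpx cpx_closed_field.

Lemma to_complex_cconj x : to_complex (cconj x) = ((to_complex x)^*)%C.
Proof. by case: x. Qed.
Lemma cconjB : {morph cconj : x y / x - y}.
Proof. by move=> x y; apply: to_complex_inj; rewrite !(to_complex_cconj, rmorphB). Qed.
Lemma cconjM : {morph cconj : x y / x * y}.
Proof. by move=> x y; apply: to_complex_inj; rewrite !(to_complex_cconj, rmorphM). Qed.
Lemma cconj1 : cconj 1 = 1.
Proof. by apply: to_complex_inj; rewrite to_complex_cconj rmorph1 rmorph1. Qed.
HB.instance Definition _ := GRing.isZmodMorphism.Build cpx cpx cconj cconjB.
HB.instance Definition _ := GRing.isMonoidMorphism.Build cpx cpx cconj (conj cconj1 cconjM).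

Lemma cpx_sqr_i : ci ^+ 2 = - 1.
Proof. by apply: to_complex_inj; rewrite rmorphXn rmorphN1 sqr_i. Qed.
Lemma cpx_sqr_normC x : `|x| ^+ 2 = x * cconj x.
Proof.
apply: to_complex_inj; rewrite rmorphXn rmorphM /= to_complex_cconj.
by rewrite -[to_complex `|x|]/(to_complex (cpx_norm x)) to_complex_norm sqr_normc.
Qed.
HB.instance Definition _ := Num.NumField_isImaginary.Build cpx cpx_sqr_i cpx_sqr_normC.

Lemma cpx_leE (x y : cpx) : (x <= y) = (to_complex x <= to_complex y).
Proof. by []. Qed.
Lemma cpx_ltE (x y : cpx) : (x < y) = (to_complex x < to_complex y).
Proof. by []. Qed.
Lemma cpx_conjE (x : cpx) : x^* = cconj x.
Proof. by []. Qed.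

(** * Adjoints, quadratic forms and positivity *)

Lemma adjM m n p (A : 'M[cpx]_(m, n)) (B : 'M[cpx]_(n, p)) : adj (A *m B) = adj B *m adj A.
Proof. by rewrite /adj map_mxM trmx_mul. Qed.
Lemma adjK m n (A : 'M[cpx]_(m, n)) : adj (adj A) = A.
Proof. by apply/matrixP=> i j; rewrite !mxE -!cpx_conjE conjCK. Qed.
Lemma adjD m n (A B : 'M[cpx]_(m, n)) : adj (A + B) = adj A + adj B.
Proof. by rewrite /adj map_mxD linearD. Qed.
Lemma adjN m n (A : 'M[cpx]_(m, n)) : adj (- A) = - adj A.
Proof. by rewrite /adj map_mxN linearN. Qed.
Lemma adjB m n (A B : 'M[cpx]_(m, n)) : adj (A - B) = adj A - adj B.
Proof. by rewrite adjD adjN. Qed.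
Lemma adj_scale m n c (A : 'M[cpx]_(m, n)) : adj (c *: A) = cconj c *: adj A.
Proof. by apply/matrixP=> i j; rewrite !mxE rmorphM. Qed.
Lemma adj_scalar n c : adj (c%:M : 'M[cpx]_n) = (cconj c)%:M.
Proof. by apply/matrixP=> i j; rewrite !mxE rmorphMn eq_sym. Qed.
Lemma adj0 m n : adj (0 : 'M[cpx]_(m, n)) = 0.
Proof. by apply/matrixP=> i j; rewrite !mxE rmorph0. Qed.
Lemma adj_block m1 m2 n1 n2 (A : 'M[cpx]_(m1, n1)) (B : 'M[cpx]_(m1, n2))
    (C : 'M[cpx]_(m2, n1)) (D : 'M[cpx]_(m2, n2)) :
  adj (block_mx A B C D) = block_mx (adj A) (adj C) (adj B) (adj D).
Proof. by rewrite /adj map_block_mx tr_block_mx. Qed.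
Lemma adj_invmx n (A : 'M[cpx]_n) : adj (invmx A) = invmx (adj A).
Proof. by rewrite /adj map_invmx trmx_inv. Qed.
Lemma adj_trmxC m n (A : 'M[cpx]_(m, n)) : adj A = ((A ^T) ^ conjC)%sesqui.
Proof. by rewrite /adj map_trmx. Qed.

(* Arguments of [rC] are read in [R_scope], so [rC (r + s)] involves [Rplus]. *)
Lemma to_complex_rC (r : R) : to_complex (rC r) = (r%:C)%C.
Proof. by []. Qed.
Lemma rCB : {morph rC : r s / r - s}.
Proof. by move=> r s; apply: to_complex_inj; rewrite rmorphB !to_complex_rC rmorphB. Qed.
Lemma rCM : {morph rC : r s / r * s}.
Proof. by move=> r s; apply: to_complex_inj; rewrite rmorphM !to_complex_rC rmorphM. Qed.
HB.instance Definition _ := GRing.isZmodMorphism.Build R cpx rC rCB.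
HB.instance Definition _ := GRing.isMonoidMorphism.Build R cpx rC (conj (erefl _) rCM).

Lemma ler_rC (r s : R) : (rC r <= rC s) = (r <= s).
Proof. by rewrite cpx_leE /= lecR. Qed.
Lemma ltr_rC (r s : R) : (rC r < rC s) = (r < s).
Proof. by rewrite cpx_ltE /= ltcR. Qed.
Lemma rC_ge0 (r : R) : Rle 0 r -> 0 <= rC r.
Proof. by move=> /RleP; rewrite -ler_rC. Qed.
Lemma rC_gt0 (r : R) : Rlt 0 r -> 0 < rC r.
Proof. by move=> /RltP; rewrite -ltr_rC. Qed.
Lemma cconj_rC (r : R) : cconj (rC r) = rC r.
Proof. by apply: to_complex_inj; rewrite to_complex_cconj to_complex_rC conjc_real. Qed.
Lemma normC_rC (z : cpx) : `|z| = rC (cabs z).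
Proof.
apply: to_complex_inj; rewrite -[to_complex `|z|]/(to_complex (cpx_norm z)).
rewrite to_complex_norm /cabs RsqrtE; case: z => a b.
by rewrite /Num.norm /= !expr2 !RmultE !mulr1.
Qed.

Definition qform k (M : 'M[cpx]_k) (w : 'cV[cpx]_k) : cpx := (adj w *m M *m w) 0 0.
Definition sqnorm k (w : 'cV[cpx]_k) : cpx := (adj w *m w) 0 0.
Definition form_le k (M N : 'M[cpx]_k) : Prop := forall w, qform M w <= qform N w.

Lemma qform1 k (w : 'cV[cpx]_k) : qform 1%:M w = sqnorm w.
Proof. by rewrite /qform mulmx1. Qed.
Lemma qformD k (M N : 'M[cpx]_k) w : qform (M + N) w = qform M w + qform N w.
Proof. by rewrite /qform mulmxDr mulmxDl mxE. Qed.
Lemma qformN k (M : 'M[cpx]_k) w : qform (- M) w = - qform M w.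
Proof. by rewrite /qform mulmxN mulNmx mxE. Qed.
Lemma qformB k (M N : 'M[cpx]_k) w : qform (M - N) w = qform M w - qform N w.
Proof. by rewrite qformD qformN. Qed.
Lemma qform_scalar k c (w : 'cV[cpx]_k) : qform c%:M w = c * sqnorm w.
Proof. by rewrite /qform mul_mx_scalar -scalemxAl mxE. Qed.
Lemma qform_cong n k (T : 'M[cpx]_(n, k)) (M : 'M[cpx]_n) w :
  qform (adj T *m M *m T) w = qform M (T *m w).
Proof. by rewrite /qform adjM !mulmxA. Qed.
Lemma sqnorm_mul n k (T : 'M[cpx]_(n, k)) w : sqnorm (T *m w) = qform (adj T *m T) w.
Proof. by rewrite -qform1 -qform_cong mulmx1. Qed.
Lemma qform_scale k (M : 'M[cpx]_k) (r : R) w : qform M (rC r *: w) = rC (r * r) * qform M w.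
Proof. by rewrite /qform adj_scale cconj_rC -scalemxAr -!scalemxAl scalerA !mxE rmorphM. Qed.

Lemma sqnormE k (w : 'cV[cpx]_k) : sqnorm w = \sum_i `|w i 0| ^+ 2.
Proof. by rewrite /sqnorm mxE; apply: eq_bigr => i _; rewrite !mxE normCK mulrC. Qed.
Lemma sqnorm_ge0 k (w : 'cV[cpx]_k) : 0 <= sqnorm w.
Proof. by rewrite sqnormE sumr_ge0 // => i _; rewrite exprn_ge0. Qed.
Lemma sqnorm_gt0 k (w : 'cV[cpx]_k) : w != 0 -> 0 < sqnorm w.
Proof.
apply: contraNT; rewrite lt_def sqnorm_ge0 andbT negbK sqnormE psumr_eq0 => [/allP w0|i _].
  apply/eqP/matrixP => i j; rewrite ord1 mxE.
  by have := w0 i (mem_index_enum _); rewrite expf_eq0 /= normr_eq0 => /eqP.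
by rewrite exprn_ge0.
Qed.
Lemma qform_diag k (d : 'rV[cpx]_k) w : qform (diag_mx d) w = \sum_i d 0 i * `|w i 0| ^+ 2.
Proof.
rewrite /qform mul_mx_diag mxE; apply: eq_bigr => i _.
by rewrite !mxE normCK -cpx_conjE; ring.
Qed.

Lemma cpx_gt0E (a : cpx) : 0 < a <-> cim a = 0 /\ Rlt 0 (cre a).
Proof.
rewrite cpx_ltE ltcE /=; split; first by case/andP => /eqP -> /RltP.
by case=> -> /RltP ->; rewrite eqxx.
Qed.
Lemma mx_posP n (M : 'M[cpx]_n) : mx_pos M <-> forall a, eigenvalue M a -> 0 < a.
Proof. by split=> h a /h /cpx_gt0E. Qed.

Lemma mx_pos_unit n (M : 'M[cpx]_n) : mx_pos M -> M \in unitmx.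
Proof.
move=> /mx_posP M_pos; rewrite -row_free_unit -kermx_eq0; apply: contraT => kerM.
have : eigenvalue M 0 by rewrite /eigenvalue /eigenspace raddf0 subr0.
by move/M_pos; rewrite ltxx.
Qed.

Lemma qform_lbound_mx_pos k (M : 'M[cpx]_k) c :
  0 < c -> (forall w, c * sqnorm w <= qform M w) -> mx_pos M.
Proof.
move=> c_gt0 lbM; apply/mx_posP => a /eigenvalueP [v Mv v_neq0].
have qMv : qform M (adj v) = a * sqnorm (adj v).
  by rewrite /qform /sqnorm !adjK Mv -scalemxAl mxE.
have v_gt0 : 0 < sqnorm (adj v).
  by apply: sqnorm_gt0; apply: contra v_neq0 => /eqP v0; rewrite -[v]adjK v0 adj0.
by have := lbM (adj v); rewrite qMv ler_pM2r //; apply: lt_le_trans.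
Qed.

(** * Spectral theory of Hermitian matrices *)

Definition spectral_form k (H P : 'M[cpx]_k) (d : 'rV[cpx]_k) : Prop :=
  [/\ adj P *m P = 1%:M, P *m adj P = 1%:M & H = adj P *m diag_mx d *m P].

Lemma hermitian_spectral_form k (H : 'M[cpx]_k) : Defs.hermitian H ->
  exists P d, spectral_form H P d /\ forall i, d 0 i \is Num.real.
Proof.
move=> hH; have Hsym : H \is hermsymmx.
  by apply/is_hermitianmxP; rewrite expr0 scale1r -adj_trmxC hH.
have /orthomx_spectralP HE := hermitian_normalmx Hsym.
have Punit := spectral_unitarymx H.
have adjP : adj (spectralmx H) = invmx (spectralmx H) by rewrite invmx_unitary // adj_trmxC.
exists (spectralmx H), (spectral_diag H); split.
  by split; rewrite adjP ?mulVmx ?mulmxV ?spectral_unit // {1}HE.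
by move=> i; have /mxOverP := hermitian_spectral_diag_real Hsym; apply.
Qed.

Section SpectralForm.
Variables (k : nat) (H P : 'M[cpx]_k) (d : 'rV[cpx]_k).

Lemma sqnorm_spectral w : spectral_form H P d -> sqnorm (P *m w) = sqnorm w.
Proof. by case=> PP _ _; rewrite sqnorm_mul PP qform1. Qed.

Lemma qform_spectral w :
  spectral_form H P d -> qform H w = \sum_i d 0 i * `|(P *m w) i 0| ^+ 2.
Proof. by case=> _ _ ->; rewrite qform_cong qform_diag. Qed.

Lemma spectral_qform_ge c : spectral_form H P d -> (forall i, c <= d 0 i) ->
  forall w, c * sqnorm w <= qform H w.
Proof.
move=> HPd c_le w; rewrite (qform_spectral _ HPd) -(sqnorm_spectral _ HPd) sqnormE mulr_sumr.
by apply: ler_sum => i _; rewrite ler_wpM2r ?exprn_ge0.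
Qed.

Lemma spectral_qform_le c : spectral_form H P d -> (forall i, d 0 i <= c) ->
  forall w, qform H w <= c * sqnorm w.
Proof.
move=> HPd le_c w; rewrite (qform_spectral _ HPd) -(sqnorm_spectral _ HPd) sqnormE mulr_sumr.
by apply: ler_sum => i _; rewrite ler_wpM2r ?exprn_ge0.
Qed.

Lemma spectral_eigenvalue i : spectral_form H P d -> eigenvalue H (d 0 i).
Proof.
case=> _ PP HE; apply/eigenvalueP; exists (row i P).
  by rewrite -row_mul HE !mulmxA PP mul1mx row_mul row_diag_mx -scalemxAl -rowE.
apply/eqP => Pi0; have := congr1 (row i) PP; rewrite row_mul Pi0 mul0mx.
by move/rowP/(_ i); rewrite !mxE eqxx => /esym/eqP; rewrite oner_eq0.
Qed.

End SpectralForm.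

Lemma pos_row_lbound k (d : 'rV[cpx]_k) : (forall i, 0 < d 0 i) ->
  exists2 c, 0 < c & forall i, c <= d 0 i.
Proof.
move=> d_gt0; set S := \sum_i (d 0 i)^-1.
have S_ge0 : 0 <= S by apply: sumr_ge0 => i _; rewrite invr_ge0 ltW.
exists (1 + S)^-1; first by rewrite invr_gt0 ltr_wpDr.
move=> i; rewrite -[d 0 i]invrK lef_pV2 ?posrE ?invr_gt0 ?ltr_wpDr //.
rewrite /S (bigD1 i) //= addrCA ler_wpDr // addr_ge0 // sumr_ge0 // => j _.
by rewrite invr_ge0 ltW.
Qed.

Lemma mx_pos_qform_lbound k (M : 'M[cpx]_k) : Defs.hermitian M -> mx_pos M ->
  exists2 c, 0 < c & forall w, c * sqnorm w <= qform M w.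
Proof.
move=> hM /mx_posP M_pos; have [P [d [HPd _]]] := hermitian_spectral_form hM.
have [c c_gt0 c_le] : exists2 c, 0 < c & forall i, c <= d 0 i.
  by apply: pos_row_lbound => i; apply/M_pos/(spectral_eigenvalue _ HPd).
by exists c; last exact: spectral_qform_ge HPd c_le.
Qed.

Lemma hermitian_qform_bounds k (M : 'M[cpx]_k) : Defs.hermitian M ->
  exists2 c : R, Rle 0 c & forall w, - rC c * sqnorm w <= qform M w <= rC c * sqnorm w.
Proof.
move=> hM; have [P [d [HPd d_real]]] := hermitian_spectral_form hM.
exists (\sum_i cabs (d 0 i)).
  by apply/RleP/sumr_ge0 => i _; apply/RleP; exact: sqrt_pos.
have d_le i : `|d 0 i| <= rC (\sum_i cabs (d 0 i)).
  by rewrite rmorph_sum (bigD1 i) //= -normC_rC ler_wpDr // sumr_ge0 // => j _; rewrite -normC_rC.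
move=> w; apply/andP; split.
  apply: (spectral_qform_ge HPd) => i.
  by rewrite lerNl (le_trans _ (d_le i)) // -normrN real_ler_norm ?realN.
by apply: (spectral_qform_le HPd) => i; rewrite (le_trans (real_ler_norm (d_real i))).
Qed.

Lemma adj_diag_real k (d : 'rV[cpx]_k) : (forall i, d 0 i \is Num.real) ->
  adj (diag_mx d) = diag_mx d.
Proof.
move=> d_real; apply/matrixP => i j; rewrite !mxE rmorphMn eq_sym.
case: (eqVneq i j) => [->|]; rewrite ?mulr0n //.
by have := conj_Creal (d_real j); rewrite cpx_conjE /= => ->.
Qed.

Lemma exists_invsqrt k (H : 'M[cpx]_k) : Defs.hermitian H -> mx_pos H ->
  exists S, Defs.hermitian S /\ mx_pos S /\ S *m S = invmx H.
Proof.
move=> hH /mx_posP H_pos; have [P [d [HPd _]]] := hermitian_spectral_form hH.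
have d_gt0 i : 0 < d 0 i by apply/H_pos/(spectral_eigenvalue _ HPd).
pose s : 'rV[cpx]_k := \row_i (sqrtC (d 0 i))^-1.
have s_gt0 i : 0 < s 0 i by rewrite mxE invr_gt0 sqrtC_gt0.
case: (HPd) => PP PP' HE; pose S := adj P *m diag_mx s *m P.
have dss : diag_mx d *m diag_mx s *m diag_mx s = 1%:M.
  rewrite !mulmx_diag -diag_const_mx; congr diag_mx; apply/rowP => j; rewrite !mxE.
  by rewrite -mulrA -invfM -expr2 sqrtCK mulfV ?lt0r_neq0.
have HSS : H *m (S *m S) = 1%:M.
  rewrite HE /S !mulmxA -[_ *m P *m adj P]mulmxA PP' mulmx1 -[_ *m P *m adj P]mulmxA PP'.
  by rewrite mulmx1 -2!(mulmxA (adj P)) dss mulmx1 PP.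
exists S; split; [|split].
- by rewrite /Defs.hermitian /S !adjM adjK adj_diag_real ?mulmxA // => i; rewrite gtr0_real.
- have SPs : spectral_form S P s by [].
  have [c c_gt0 c_le] := pos_row_lbound s_gt0.
  exact: qform_lbound_mx_pos c_gt0 (spectral_qform_ge SPs c_le).
- by have [H_unit _] := mulmx1_unit HSS; rewrite -[S *m S](mulKmx H_unit) HSS mulmx1.
Qed.

Definition is_inv_sqrt k (S M : 'M[cpx]_k) : Prop :=
  [/\ Defs.hermitian S, S *m S = invmx M & M \in unitmx].

Lemma invsqrtP k (M : 'M[cpx]_k) : Defs.hermitian M -> mx_pos M -> is_inv_sqrt (invsqrt M) M.
Proof.
move=> hM M_pos; have [hS [_ SS]] := epsilon_spec (inhabits 0) _ (exists_invsqrt hM M_pos).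
by split=> //; exact: mx_pos_unit.
Qed.

Lemma invmx_eq n (A B : 'M[cpx]_n) : A *m B = 1%:M -> invmx A = B.
Proof. by move=> AB; have [A_unit _] := mulmx1_unit AB; rewrite -(mulKmx A_unit B) AB mulmx1. Qed.

Lemma is_inv_sqrt_invmx n (S M : 'M[cpx]_n) :
  is_inv_sqrt S M -> S \in unitmx /\ invmx S *m invmx S = M.
Proof.
case=> _ SS M_unit; have S_unit : S \in unitmx.
  by move: (unitmx_inv M); rewrite -SS unitmx_mul M_unit => /andP [].
split=> //; rewrite -[M]invmxK -SS; apply/esym/invmx_eq.
by rewrite mulmxA -[S *m S *m _]mulmxA mulmxV // mulmx1 mulmxV.
Qed.

Lemma hermitian_block n k (M : 'M[cpx]_n) (N : 'M[cpx]_k) :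
  Defs.hermitian M -> Defs.hermitian N -> Defs.hermitian (block_mx M 0 0 N).
Proof. by move=> hM hN; rewrite /Defs.hermitian adj_block !adj0 hM hN. Qed.

Lemma is_inv_sqrt_block n k (S M : 'M[cpx]_n) (S' M' : 'M[cpx]_k) :
  is_inv_sqrt S M -> is_inv_sqrt S' M' ->
  is_inv_sqrt (block_mx S 0 0 S') (block_mx M 0 0 M').
Proof.
case=> hS SS M_unit [hS' SS' M'_unit].
have MM'_unit : block_mx M 0 0 M' \in unitmx.
  by rewrite unitmxE det_ublock unitrM -!unitmxE M_unit M'_unit.
split=> //; first exact: hermitian_block.
by rewrite invmx_block_diag // mulmx_block SS SS' !mulmx0 !mul0mx !addr0 !add0r.
Qed.

(** * Infima and operator norms *)

Section Infimum.
Local Open Scope R_scope.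

Lemma is_inf_Inf (E : R -> Prop) : (exists x, E x) -> (forall x, E x -> 0 <= x) -> is_inf E (Inf E).
Proof.
move=> [x0 Ex0] E_ge0; apply: epsilon_spec.
have E_bound : bound (fun y => E (- y)) by exists 0 => y /E_ge0; lra.
have E_ne : exists y, E (- y) by exists (- x0); rewrite Ropp_involutive.
have [m [m_ub m_lub]] := completeness _ E_bound E_ne.
exists (- m); split=> [x Ex | b b_lb].
  by have := m_ub (- x); rewrite Ropp_involutive => /(_ Ex); lra.
suff : m <= - b by lra.
by apply: m_lub => y /b_lb; lra.
Qed.

Lemma is_inf_le (E : R -> Prop) m x : is_inf E m -> E x -> m <= x.
Proof. by case=> lb _ /lb. Qed.

Lemma is_inf_ge (E : R -> Prop) m b : is_inf E m -> (forall x, E x -> b <= x) -> b <= m.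
Proof. by case=> _ glb /glb. Qed.

Lemma is_inf_approx (E : R -> Prop) m eps : is_inf E m -> 0 < eps -> exists2 x, E x & x < m + eps.
Proof.
move=> Em eps_gt0; apply: NNPP => no_x.
suff : m + eps <= m by lra.
by apply: (is_inf_ge Em) => x Ex; apply: Rnot_lt_le => lt_x; apply: no_x; exists x.
Qed.


Lemma is_inf_setI (E E1 E2 : R -> Prop) m m1 m2 :
  is_inf E m -> is_inf E1 m1 -> is_inf E2 m2 -> (forall t, E t <-> E1 t /\ E2 t) ->
  (forall t t', E1 t -> t <= t' -> E1 t') -> (forall t t', E2 t -> t <= t' -> E2 t') ->
  m = Rmax m1 m2.
Proof.
move=> Em Em1 Em2 EI up1 up2; apply: Rle_antisym; last first.
  by apply: Rmax_lub; apply: (is_inf_ge Em) => x /EI [E1x E2x];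
    [exact: is_inf_le Em1 E1x | exact: is_inf_le Em2 E2x].
apply: Rnot_lt_le => lt_m; have eps_gt0 : 0 < m - Rmax m1 m2 by lra.
have [t1 E1t1 lt_t1] := is_inf_approx Em1 eps_gt0.
have [t2 E2t2 lt_t2] := is_inf_approx Em2 eps_gt0.
have m1_le := Rmax_l m1 m2; have m2_le := Rmax_r m1 m2.
have Et : E (Rmax t1 t2) by apply/EI; split; [apply: up1 E1t1 _ | apply: up2 E2t2 _];
  [exact: Rmax_l | exact: Rmax_r].
have : Rmax t1 t2 < m by apply: Rmax_lub_lt; lra.
have := is_inf_le Em Et; lra.
Qed.

Lemma is_inf_scale_le (F G : R -> Prop) mF mG o :
  is_inf F mF -> is_inf G mG -> 0 <= o -> (exists t, F t) ->
  (forall t s, F t -> o * t < s -> G s) -> mG <= o * mF.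
Proof.
move=> FmF GmG o_ge0 [t0 Ft0] FG.
have le_mG t : F t -> mG <= o * t.
  move=> Ft; apply: Rnot_lt_le => lt_t.
  have Gs : G ((mG + o * t) / 2) by apply: (FG t) => //; lra.
  by have := is_inf_le GmG Gs; lra.
have [o0|o_neq0] := Req_dec o 0; first by move: (le_mG _ Ft0); rewrite o0 !Rmult_0_l.
have o_gt0 : 0 < o by lra.
rewrite -(Rmult_1_l mG) -(Rinv_r o) // Rmult_assoc; apply: Rmult_le_compat_l => //.
apply: (is_inf_ge FmF) => t /le_mG le_t; apply: (Rmult_le_reg_l o) => //.
by rewrite -Rmult_assoc Rinv_r //; lra.
Qed.

End Infimum.

Section OperatorNorm.
Local Open Scope R_scope.

Lemma vnorm_ge0 k (v : 'cV[cpx]_k) : 0 <= vnorm v.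
Proof. exact: sqrt_pos. Qed.

Lemma sqnorm_vnorm k (v : 'cV[cpx]_k) : sqnorm v = rC (vnorm v ^ 2).
Proof.
have sum_sq : rC (\big[Rplus/0]_(i < k) (cabs (v i ord0) ^ 2)) = sqnorm v.
  rewrite rmorph_sum sqnormE; apply: eq_bigr => i _.
  by rewrite /= Rmult_1_r normC_rC expr2 -rmorphM.
have sum_ge0 : 0 <= \big[Rplus/0]_(i < k) (cabs (v i ord0) ^ 2).
  by apply/RleP; rewrite -ler_rC sum_sq sqnorm_ge0.
by rewrite /vnorm pow2_sqrt.
Qed.

Lemma sqnorm_le_vnorm m k (u : 'cV[cpx]_m) (w : 'cV[cpx]_k) c :
  (sqnorm u <= rC c * sqnorm w)%R <-> vnorm u ^ 2 <= c * vnorm w ^ 2.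
Proof. by rewrite !sqnorm_vnorm -rmorphM ler_rC; split => /RleP. Qed.

Lemma opnorm_bounded m n (T : 'M[cpx]_(m, n)) :
  exists2 c, 0 <= c & forall v, vnorm (T *m v)%R <= c * vnorm v.
Proof.
have TT_herm : Defs.hermitian (adj T *m T)%R by rewrite /Defs.hermitian adjM adjK.
have [c c_ge0 T_le] := hermitian_qform_bounds TT_herm.
exists (sqrt c) => [|v]; first exact: sqrt_pos.
apply: Rsqr_incr_0_var; last by apply: Rmult_le_pos; [exact: sqrt_pos | exact: vnorm_ge0].
rewrite Rsqr_mult Rsqr_sqrt // !Rsqr_pow2; apply/sqnorm_le_vnorm.
by rewrite sqnorm_mul; case/andP: (T_le v).
Qed.

Lemma opnorm_is_inf m n (T : 'M[cpx]_(m, n)) :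
  is_inf (fun c => 0 <= c /\ forall v, vnorm (T *m v)%R <= c * vnorm v) (opnorm T).
Proof.
apply: is_inf_Inf => [|c []//].
by have [c c_ge0 T_le] := opnorm_bounded T; exists c.
Qed.

Lemma opnorm_ge0 m n (T : 'M[cpx]_(m, n)) : 0 <= opnorm T.
Proof. by apply: (is_inf_ge (opnorm_is_inf T)) => c []. Qed.

Lemma vnorm_mul_le m n (T : 'M[cpx]_(m, n)) v : vnorm (T *m v)%R <= opnorm T * vnorm v.
Proof.
have Tv_ge0 := vnorm_ge0 (T *m v)%R; have T_ge0 := opnorm_ge0 T.
have [v0|v_neq0] := Req_dec (vnorm v) 0.
  by have [c _ T_le] := opnorm_bounded T; have := T_le v; rewrite v0 !Rmult_0_r.
have v_gt0 : 0 < vnorm v by have := vnorm_ge0 v; lra.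
rewrite -(Rmult_1_r (vnorm _)) -(Rinv_l (vnorm v)) // -Rmult_assoc.
apply: Rmult_le_compat_r; first lra.
apply: (is_inf_ge (opnorm_is_inf T)) => c [_ /(_ v) T_le].
apply: (Rmult_le_reg_r (vnorm v)) => //.
by rewrite Rmult_assoc Rinv_l // Rmult_1_r.
Qed.

Lemma sqnorm_mul_le m n (T : 'M[cpx]_(m, n)) w :
  (sqnorm (T *m w) <= rC (opnorm T ^ 2) * sqnorm w)%R.
Proof.
apply/sqnorm_le_vnorm; rewrite -Rpow_mult_distr.
by apply: pow_incr; split; [exact: vnorm_ge0 | exact: vnorm_mul_le].
Qed.

Lemma opnorm_le1 m n (T : 'M[cpx]_(m, n)) :
  (forall w, sqnorm (T *m w) <= sqnorm w)%R -> opnorm T <= 1.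
Proof.
move=> T_le; apply: (is_inf_le (opnorm_is_inf T)); split=> [|v]; first lra.
rewrite Rmult_1_l; apply: Rsqr_incr_0_var; last exact: vnorm_ge0.
by rewrite !Rsqr_pow2 -[vnorm v ^ 2]Rmult_1_l -sqnorm_le_vnorm rmorph1 mul1r.
Qed.

End OperatorNorm.

(** * Matrices over [Z] *)

Section ScalarAction.
Variable Z : lmodType cpx.

Lemma lmulZ_mulmx m n p q (S : 'M[cpx]_(m, n)) (S' : 'M[cpx]_(n, p)) (A : 'M[Z]_(p, q)) :
  lmulZ S (lmulZ S' A) = lmulZ (S *m S') A.
Proof.
apply/matrixP => i j; rewrite !mxE.
under eq_bigr => l _ do rewrite mxE scaler_sumr.
rewrite exchange_big /=; apply: eq_bigr => k _; rewrite mxE scaler_suml.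
by apply: eq_bigr => l _; rewrite scalerA.
Qed.

Lemma rmulZ_mulmx m n p q (A : 'M[Z]_(m, n)) (S : 'M[cpx]_(n, p)) (S' : 'M[cpx]_(p, q)) :
  rmulZ (rmulZ A S) S' = rmulZ A (S *m S').
Proof.
apply/matrixP => i j; rewrite !mxE.
under eq_bigr => l _ do rewrite mxE scaler_sumr.
rewrite exchange_big /=; apply: eq_bigr => k _; rewrite mxE scaler_suml.
by apply: eq_bigr => l _; rewrite scalerA mulrC.
Qed.

Lemma lmulZ_rmulZ m n p q (S : 'M[cpx]_(m, n)) (A : 'M[Z]_(n, p)) (S' : 'M[cpx]_(p, q)) :
  lmulZ S (rmulZ A S') = rmulZ (lmulZ S A) S'.
Proof.
apply/matrixP => i j; rewrite !mxE.
under eq_bigr => l _ do rewrite mxE scaler_sumr.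
under [RHS]eq_bigr => l _ do rewrite mxE scaler_sumr.
rewrite exchange_big /=; apply: eq_bigr => k _; apply: eq_bigr => l _.
by rewrite !scalerA mulrC.
Qed.

Lemma lmulZ_scalar m n (c : cpx) (A : 'M[Z]_(m, n)) :
  lmulZ c%:M A = map_mx (fun z => c *: z) A.
Proof.
apply/matrixP => i j; rewrite !mxE (bigD1 i) //= big1 ?addr0 => [|l /negPf il].
  by rewrite mxE eqxx mulr1n.
by rewrite mxE eq_sym il mulr0n scale0r.
Qed.

Lemma rmulZ_scalar m n (c : cpx) (A : 'M[Z]_(m, n)) :
  rmulZ A c%:M = map_mx (fun z => c *: z) A.
Proof.
apply/matrixP => i j; rewrite !mxE (bigD1 j) //= big1 ?addr0 => [|l /negPf lj].
  by rewrite mxE eqxx mulr1n.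
by rewrite mxE lj mulr0n scale0r.
Qed.

Lemma congZ_mulmx n k p (B : 'M[cpx]_(n, k)) (C : 'M[cpx]_(k, p)) (A : 'M[Z]_n) :
  congZ (B *m C) A = congZ C (congZ B A).
Proof. by rewrite /congZ adjM -lmulZ_mulmx -rmulZ_mulmx lmulZ_rmulZ. Qed.

Lemma congZ1 n (A : 'M[Z]_n) : congZ 1%:M A = A.
Proof.
rewrite /congZ adj_scalar rmorph1 lmulZ_scalar rmulZ_scalar.
by apply/matrixP => i j; rewrite !mxE !scale1r.
Qed.

Lemma congZ_rC n (r : R) (A : 'M[Z]_n) : congZ (rC r)%:M A = smulZ (r * r) A.
Proof.
rewrite /congZ adj_scalar cconj_rC lmulZ_scalar rmulZ_scalar.
by apply/matrixP => i j; rewrite !mxE scalerA rmorphM.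
Qed.

Lemma congZ_smulZ n k (S : 'M[cpx]_(n, k)) r (A : 'M[Z]_n) :
  congZ S (smulZ r A) = smulZ r (congZ S A).
Proof.
have smulZE m (B : 'M[Z]_m) : smulZ r B = lmulZ (rC r)%:M B by rewrite lmulZ_scalar.
by rewrite /congZ !smulZE -lmulZ_rmulZ !lmulZ_mulmx scalar_mxC.
Qed.

Lemma big_scale0r k (f : 'I_k -> Z) : \sum_(l < k) (0 : cpx) *: f l = 0.
Proof. by rewrite big1 // => l _; rewrite scale0r. Qed.
Lemma big_scaler0 k (f : 'I_k -> cpx) : \sum_(l < k) f l *: (0 : Z) = 0.
Proof. by rewrite big1 // => l _; rewrite scaler0. Qed.

Lemma lmulZ_block m1 m2 n1 n2 p1 p2 (S1 : 'M[cpx]_(m1, n1)) (S2 : 'M[cpx]_(m2, n2))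
    (A : 'M[Z]_(n1, p1)) (B : 'M[Z]_(n2, p2)) :
  lmulZ (block_mx S1 0 0 S2) (block_mx A 0 0 B) = block_mx (lmulZ S1 A) 0 0 (lmulZ S2 B).
Proof.
apply/matrixP => i j; rewrite [LHS]mxE big_split_ord /=.
rewrite -(splitK i) -(splitK j); case: (split i) => i'; case: (split j) => j' /=;
under eq_bigr => l _ do rewrite ?(block_mxEul, block_mxEur, block_mxEdl, block_mxEdr) ?mxE;
under [X in _ + X]eq_bigr => l _ do rewrite ?(block_mxEul, block_mxEur, block_mxEdl, block_mxEdr) ?mxE;
by rewrite ?(block_mxEul, block_mxEur, block_mxEdl, block_mxEdr) !mxE
  ?big_scale0r ?big_scaler0 ?addr0 ?add0r.
Qed.

Lemma rmulZ_block m1 m2 n1 n2 p1 p2 (S1 : 'M[cpx]_(n1, p1)) (S2 : 'M[cpx]_(n2, p2))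
    (A : 'M[Z]_(m1, n1)) (B : 'M[Z]_(m2, n2)) :
  rmulZ (block_mx A 0 0 B) (block_mx S1 0 0 S2) = block_mx (rmulZ A S1) 0 0 (rmulZ B S2).
Proof.
apply/matrixP => i j; rewrite [LHS]mxE big_split_ord /=.
rewrite -(splitK i) -(splitK j); case: (split i) => i'; case: (split j) => j' /=;
under eq_bigr => l _ do rewrite ?(block_mxEul, block_mxEur, block_mxEdl, block_mxEdr) ?mxE;
under [X in _ + X]eq_bigr => l _ do rewrite ?(block_mxEul, block_mxEur, block_mxEdl, block_mxEdr) ?mxE;
by rewrite ?(block_mxEul, block_mxEur, block_mxEdl, block_mxEdr) !mxE
  ?big_scale0r ?big_scaler0 ?addr0 ?add0r.
Qed.

Lemma congZ_block n k p q (S1 : 'M[cpx]_(n, p)) (S2 : 'M[cpx]_(k, q))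
    (A : 'M[Z]_n) (B : 'M[Z]_k) :
  congZ (block_mx S1 0 0 S2) (dsumZ A B) = dsumZ (congZ S1 A) (congZ S2 B).
Proof. by rewrite /congZ /dsumZ adj_block !adj0 rmulZ_block lmulZ_block. Qed.

End ScalarAction.

(** * The unitization *)

Lemma ReM_hermitian n (X : 'M[cpx]_n) : Defs.hermitian (Defs.ReM X).
Proof. by rewrite /Defs.hermitian /Defs.ReM adj_scale cconj_rC adjD adjK addrC. Qed.

Lemma Xt_hermitian n t (X : 'M[cpx]_n) : Defs.hermitian (Xt t X).
Proof. by rewrite /Defs.hermitian /Xt adjB adj_scalar cconj_rC ReM_hermitian. Qed.

Lemma qform_Xt n t (X : 'M[cpx]_n) w : qform (Xt t X) w = rC t * sqnorm w - qform (Defs.ReM X) w.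
Proof. by rewrite /Xt qformB qform_scalar. Qed.

Lemma ReM_cong n k (T : 'M[cpx]_(n, k)) X : Defs.ReM (adj T *m X *m T) = adj T *m Defs.ReM X *m T.
Proof. by rewrite /Defs.ReM !adjM adjK -scalemxAr -scalemxAl mulmxDr mulmxDl !mulmxA. Qed.

Lemma ReM_block n k (X : 'M[cpx]_n) (Y : 'M[cpx]_k) :
  Defs.ReM (block_mx X 0 0 Y) = block_mx (Defs.ReM X) 0 0 (Defs.ReM Y).
Proof. by rewrite /Defs.ReM adj_block !adj0 add_block_mx scale_block_mx !addr0 !scaler0. Qed.

Lemma Xt_block n k t (X : 'M[cpx]_n) (Y : 'M[cpx]_k) :
  Xt t (block_mx X 0 0 Y) = block_mx (Xt t X) 0 0 (Xt t Y).
Proof.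
by rewrite /Xt ReM_block (scalar_mx_block n k) opp_block_mx add_block_mx !oppr0 !addr0.
Qed.

Lemma mx_pos_block n k (M : 'M[cpx]_n) (N : 'M[cpx]_k) :
  mx_pos (block_mx M 0 0 N) <-> mx_pos M /\ mx_pos N.
Proof.
rewrite !mx_posP; split=> [MN_pos | [M_pos N_pos] a /eigenvalueP [u]].
  split=> a /eigenvalueP [v vM v_neq0]; apply: MN_pos; apply/eigenvalueP.
    exists (row_mx v 0); last by rewrite row_mx_eq0 negb_and v_neq0.
    by rewrite mul_row_block !mul0mx !mulmx0 !addr0 vM scale_row_mx scaler0.
  exists (row_mx 0 v); last by rewrite row_mx_eq0 negb_and v_neq0 orbT.
  by rewrite mul_row_block !mul0mx !mulmx0 !add0r vM scale_row_mx scaler0.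
rewrite -(hsubmxK u) mul_row_block !mulmx0 addr0 add0r scale_row_mx.
move=> /eq_row_mx [uM uN]; rewrite row_mx_eq0 negb_and => /orP [ul_neq0|ur_neq0].
  by apply: M_pos; apply/eigenvalueP; exists (lsubmx u).
by apply: N_pos; apply/eigenvalueP; exists (rsubmx u).
Qed.

Lemma Xt_qform_bounds n (X : 'M[cpx]_n) : exists2 c : R, Rle 0 c &
  forall t w, rC (t - c) * sqnorm w <= qform (Xt t X) w <= rC (t + c) * sqnorm w.
Proof.
have [c c_ge0 ReX_bounds] := hermitian_qform_bounds (ReM_hermitian X).
exists c => // t w; have /andP [ReX_ge ReX_le] := ReX_bounds w.
by rewrite rmorphB rmorphD mulrBl mulrDl qform_Xt !lerD2l lerN2 ReX_le lerNl -mulNr ReX_ge.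
Qed.

Lemma mx_pos_Xt_ge n t t' (X : 'M[cpx]_n) : mx_pos (Xt t X) -> t <= t' -> mx_pos (Xt t' X).
Proof.
move=> Xt_pos le_tt'; have [c c_gt0 c_le] := mx_pos_qform_lbound (Xt_hermitian t X) Xt_pos.
apply: (qform_lbound_mx_pos c_gt0) => w; apply: le_trans (c_le w) _.
by rewrite !qform_Xt lerD2r ler_wpM2r ?sqnorm_ge0 ?ler_rC.
Qed.

Section Unitization.
Variables (Z : lmodType cpx) (nu : forall n, 'M[Z]_n -> R).
Hypothesis nu_gauge : matrix_gauge nu.
Local Open Scope R_scope.

Lemma nu_ge0 n (A : 'M[Z]_n) : 0 <= nu A.
Proof. by case: nu_gauge => ge0 _; apply: ge0. Qed.
Lemma nu_smulZ n t (A : 'M[Z]_n) : 0 <= t -> nu (smulZ t A) = t * nu A.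
Proof. by case: nu_gauge => _ [_ [smul _]]; apply: smul. Qed.
Lemma nu_congZ n k (X : 'M[cpx]_(n, k)) (A : 'M[Z]_n) : nu (congZ X A) <= opnorm X ^ 2 * nu A.
Proof. by case: nu_gauge => _ [_ [_ [cong _]]]; apply: cong. Qed.
Lemma nu_dsumZ n m (A : 'M[Z]_n) (B : 'M[Z]_m) : nu (dsumZ A B) = Rmax (nu A) (nu B).
Proof. by case: nu_gauge => _ [_ [_ [_ dsum]]]; apply: dsum. Qed.

(* [W := S^-1 T S'] is a contraction and carries [congZ S A] to [congZ S' (congZ T A)]. *)
Lemma nu_congZ_le n k (S M : 'M[cpx]_n) (S' M' : 'M[cpx]_k) (T : 'M[cpx]_(n, k)) A :
  is_inv_sqrt S M -> is_inv_sqrt S' M' -> form_le (adj T *m M *m T)%R M' ->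
  nu (congZ S' (congZ T A)) <= nu (congZ S A).
Proof.
move=> SM S'M' TMT_le; have [S_unit invSS] := is_inv_sqrt_invmx SM.
have [S'_unit invSS'] := is_inv_sqrt_invmx S'M'.
have [[hS _ _] [hS' _ _]] := (SM, S'M').
pose W := (invmx S *m T *m S')%R.
have -> : congZ S' (congZ T A) = congZ W (congZ S A).
  by rewrite -!congZ_mulmx /W !mulmxA (mulmxV S_unit) mul1mx.
have S'M'S' : (S' *m M' *m S' = 1%:M)%R.
  by rewrite -invSS' !mulmxA (mulmxV S'_unit) mul1mx (mulVmx S'_unit).
have W_le1 : opnorm W <= 1.
  apply: opnorm_le1 => w; rewrite /W -!mulmxA sqnorm_mul adj_invmx hS invSS.
  by rewrite -qform_cong (le_trans (TMT_le _)) // -qform_cong hS' S'M'S' qform1.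
have W_ge0 := opnorm_ge0 W; have SAS_ge0 := nu_ge0 (congZ S A).
have W2_le1 : opnorm W ^ 2 <= 1 by rewrite /= Rmult_1_r; nra.
by apply: Rle_trans (nu_congZ _ _) _; nra.
Qed.

Lemma nu_congZ_inv_sqrt n (S S' M : 'M[cpx]_n) (A : 'M[Z]_n) :
  is_inv_sqrt S M -> is_inv_sqrt S' M -> nu (congZ S A) = nu (congZ S' A).
Proof.
move=> SM S'M; have M_le : form_le (adj 1%:M *m M *m 1%:M)%R M.
  by move=> w; rewrite qform_cong mul1mx.
have := nu_congZ_le A SM S'M M_le; have := nu_congZ_le A S'M SM M_le.
by rewrite !congZ1; lra.
Qed.

Lemma nu_invsqrt_dsumZ n k (M : 'M[cpx]_n) (N : 'M[cpx]_k) (A : 'M[Z]_n) (B : 'M[Z]_k) :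
  Defs.hermitian M -> mx_pos M -> Defs.hermitian N -> mx_pos N ->
  nu (congZ (invsqrt (block_mx M 0 0 N)) (dsumZ A B)) =
  Rmax (nu (congZ (invsqrt M) A)) (nu (congZ (invsqrt N) B)).
Proof.
move=> hM M_pos hN N_pos.
have MN_sqrt := invsqrtP (hermitian_block hM hN) (proj2 (mx_pos_block M N) (conj M_pos N_pos)).
have blk_sqrt := is_inv_sqrt_block (invsqrtP hM M_pos) (invsqrtP hN N_pos).
by rewrite (nu_congZ_inv_sqrt _ MN_sqrt blk_sqrt) congZ_block nu_dsumZ.
Qed.

Lemma ufeasE n (A : 'M[Z]_n) X t : ufeas nu A X t <->
  0 < t /\ mx_pos (Xt t X) /\ nu (congZ (invsqrt (Xt t X)) A) <= 1.
Proof.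
suff Xt_cong : mx_pos (Xt t X) ->
    lmulZ (invsqrt (Xt t X)) (rmulZ A (invsqrt (Xt t X))) = congZ (invsqrt (Xt t X)) A.
  by split=> -[t_gt0 [Xt_pos nu_le]]; do !split=> //; rewrite ?Xt_cong // -Xt_cong.
by move=> Xt_pos; have [hS _ _] := invsqrtP (Xt_hermitian t X) Xt_pos; rewrite /congZ hS.
Qed.

Lemma ufeas_ge n (A : 'M[Z]_n) X t t' : ufeas nu A X t -> t <= t' -> ufeas nu A X t'.
Proof.
move=> /ufeasE [t_gt0 [Xt_pos nu_le]] le_tt'.
have Xt'_pos : mx_pos (Xt t' X) by apply: (mx_pos_Xt_ge Xt_pos); apply/RleP.
apply/ufeasE; split; first lra; split=> //; apply: Rle_trans nu_le.
rewrite -[A in congZ _ A]congZ1.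
apply: (nu_congZ_le A (invsqrtP (Xt_hermitian t X) Xt_pos) (invsqrtP (Xt_hermitian t' X) Xt'_pos)).
by move=> w; rewrite qform_cong mul1mx !qform_Xt lerD2r ler_wpM2r ?sqnorm_ge0 ?ler_rC //; apply/RleP.
Qed.

(* [X_t0] is positive for [t0 := c + 1]; taking [t] so large that [X_t] dominates
   [(g + 1) X_t0], where [g] is the gauge at [t0], brings the gauge down to [g / (g + 1)]. *)
Lemma ufeas_exists n (A : 'M[Z]_n) X : exists t, ufeas nu A X t.
Proof.
have [c c_ge0 Xt_bounds] := Xt_qform_bounds X.
pose t0 := c + 1; pose g := nu (congZ (invsqrt (Xt t0 X)) A).
have g_ge0 : 0 <= g := nu_ge0 _.
pose t := c + (t0 + c) * (g + 1).
have t_gt0 : 0 < t by rewrite /t /t0; nra.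
have Xt0_pos : mx_pos (Xt t0 X).
  apply: (qform_lbound_mx_pos ltr01) => w; have /andP [Xt0_ge _] := Xt_bounds t0 w.
  by rewrite (_ : t0 - c = 1) in Xt0_ge; [exact: Xt0_ge | rewrite /t0; lra].
have Xt_pos : mx_pos (Xt t X) by apply: (mx_pos_Xt_ge Xt0_pos); apply/RleP; rewrite /t /t0; nra.
pose r := sqrt (g + 1); have rr : r * r = g + 1 by apply: sqrt_sqrt; lra.
have Xt0_le : form_le (adj (rC r)%:M *m Xt t0 X *m (rC r)%:M)%R (Xt t X).
  move=> w; rewrite qform_cong mul_scalar_mx qform_scale.
  have /andP [_ Xt0_le] := Xt_bounds t0 w; have /andP [Xt_ge _] := Xt_bounds t w.
  have rr_ge0 : (0 <= rC (r * r))%R by apply: rC_ge0; rewrite rr; lra.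
  apply: le_trans (ler_wpM2l rr_ge0 Xt0_le) (le_trans _ Xt_ge).
  rewrite mulrA -rmorphM ler_wpM2r ?sqnorm_ge0 // ler_rC.
  by apply/RleP; rewrite -RmultE rr /t; nra.
have := nu_congZ_le A (invsqrtP (Xt_hermitian t0 X) Xt0_pos) (invsqrtP (Xt_hermitian t X) Xt_pos) Xt0_le.
rewrite congZ_rC congZ_smulZ nu_smulZ rr -/g => [nu_le|]; last lra.
have nu_t_ge0 := nu_ge0 (congZ (invsqrt (Xt t X)) A).
by exists t; apply/ufeasE; do !split => //; nra.
Qed.

Lemma unorm_is_inf n (A : 'M[Z]_n) X : is_inf (ufeas nu A X) (unorm nu A X).
Proof. by apply: is_inf_Inf => [|t /ufeasE [t_gt0 _]]; [exact: ufeas_exists | lra]. Qed.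

Lemma ufeas_dsumZ n k (A : 'M[Z]_n) X (B : 'M[Z]_k) Y t :
  ufeas nu (dsumZ A B) (block_mx X 0 0 Y) t <-> ufeas nu A X t /\ ufeas nu B Y t.
Proof.
rewrite !ufeasE Xt_block mx_pos_block; split.
  case=> t_gt0 [[Xt_pos Yt_pos]].
  rewrite (nu_invsqrt_dsumZ _ _ (Xt_hermitian t X) Xt_pos (Xt_hermitian t Y) Yt_pos) => nu_le.
  by split; do !split=> //; apply: Rle_trans nu_le; [exact: Rmax_l | exact: Rmax_r].
case=> [[t_gt0 [Xt_pos nuA_le]] [_ [Yt_pos nuB_le]]]; do !split=> //.
rewrite (nu_invsqrt_dsumZ _ _ (Xt_hermitian t X) Xt_pos (Xt_hermitian t Y) Yt_pos).
exact: Rmax_lub.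
Qed.

(* [T^* X_t T <= ||T||^2 t - T^* Re(X) T], which is strictly below [s - Re(T^* X T)]. *)
Lemma ufeas_congZ n k (A : 'M[Z]_n) X (T : 'M[cpx]_(n, k)) t s :
  ufeas nu A X t -> opnorm T ^ 2 * t < s -> ufeas nu (congZ T A) (adj T *m X *m T)%R s.
Proof.
move=> /ufeasE [t_gt0 [Xt_pos nu_le]] lt_s.
have Tt_ge0 := Rmult_le_pos _ _ (pow2_ge_0 (opnorm T)) (Rlt_le _ _ t_gt0).
have s_gt0 : 0 < s by lra.
have delta_gt0 : (0 < rC (s - opnorm T ^ 2 * t))%R by apply: rC_gt0; lra.
set Y := Xt s (adj T *m X *m T)%R.
have Y_ge w : (qform (adj T *m Xt t X *m T) w + rC (s - opnorm T ^ 2 * t) * sqnorm w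
               <= qform Y w)%R.
  rewrite /Y qform_cong !qform_Xt ReM_cong qform_cong addrAC lerD2r.
  have -> : rC s = (rC (opnorm T ^ 2 * t) + rC (s - opnorm T ^ 2 * t))%R.
    by rewrite -rmorphD -RplusE; congr rC; lra.
  rewrite mulrDl lerD2r rmorphM [(rC (opnorm T ^ 2) * _)%R]mulrC -mulrA ler_wpM2l ?sqnorm_mul_le //.
  by apply: rC_ge0; lra.
have [c c_gt0 c_le] := mx_pos_qform_lbound (Xt_hermitian t X) Xt_pos.
have XtT_ge0 w : (0 <= qform (adj T *m Xt t X *m T) w)%R.
  rewrite qform_cong; apply: le_trans (c_le _).
  by apply: mulr_ge0; [exact: ltW | exact: sqnorm_ge0].
have Y_pos : mx_pos Y.
  apply: (qform_lbound_mx_pos delta_gt0) => w; apply: le_trans _ (Y_ge w).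
  by rewrite lerDr.
apply/ufeasE; do !split=> //; apply: Rle_trans nu_le.
apply: (nu_congZ_le A (invsqrtP (Xt_hermitian t X) Xt_pos) (invsqrtP (Xt_hermitian _ _) Y_pos)).
move=> w; apply: le_trans _ (Y_ge w); rewrite lerDl.
by apply: mulr_ge0; [exact: ltW | exact: sqnorm_ge0].
Qed.

End Unitization.

Local Open Scope R_scope.

Theorem lemma4p4 (Z : lmodType cpx) (nu : forall n, 'M[Z]_n -> R)
  (Hgauge : matrix_gauge nu) (Hproper : C_proper nu) :
  (* well-definedness: nonempty defining set, infimum attained as a value in [0,oo) *)
  (forall n (A : 'M[Z]_n) (X : 'M[cpx]_n),
     (exists t, ufeas nu A X t) /\
     is_inf (ufeas nu A X) (unorm nu A X) /\ 0 <= unorm nu A X) /\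
  (* direct sums *)
  (forall n k (A : 'M[Z]_n) (X : 'M[cpx]_n) (B : 'M[Z]_k) (Y : 'M[cpx]_k),
     unorm nu (dsumZ A B) (block_mx X 0%R 0%R Y) = Rmax (unorm nu A X) (unorm nu B Y)) /\
  (* congruence by a scalar matrix T *)
  (forall n k (A : 'M[Z]_n) (X : 'M[cpx]_n) (T : 'M[cpx]_(n, k)),
     unorm nu (congZ T A) (adj T *m X *m T)%R <= opnorm T ^ 2 * unorm nu A X).
Proof.
split; [|split].
- move=> n A X; split; first exact: ufeas_exists.
  split; first exact: unorm_is_inf.
  by apply: (is_inf_ge (unorm_is_inf Hgauge A X)) => t /ufeasE [t_gt0 _]; lra.
- move=> n k A X B Y; apply: (is_inf_setI (unorm_is_inf Hgauge _ _)
    (unorm_is_inf Hgauge A X) (unorm_is_inf Hgauge B Y)); first exact: ufeas_dsumZ.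
  + exact: ufeas_ge.
  + exact: ufeas_ge.
- move=> n k A X T; apply: (is_inf_scale_le (unorm_is_inf Hgauge A X) (unorm_is_inf Hgauge _ _)).
  + exact: pow2_ge_0.
  + exact: ufeas_exists.
  + by move=> t s; apply: ufeas_congZ.
Qed.
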